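(* Let $p$ be a prime, $\overline{\mathbb{F}}_p$ an algebraic closure of $\mathbb{F}_p$, and let $V$ be a finite subgroup of the additive group of $\overline{\mathbb{F}}_p$. For any finite additive subgroup $U\subseteq\overline{\mathbb{F}}_p$ put $L_U(T)=\prod_{u\in U}(T-u)$. Let $f(x)\in\overline{\mathbb{F}}_p[x]$ and $h(T,x)=L_V(T)-f(x)\in\overline{\mathbb{F}}_p[T,x]$. Then $h(T,x)$ is reducible in $\overline{\mathbb{F}}_p[T,x]$ if and only if there exist a polynomial $g(x)\in\overline{\mathbb{F}}_p[x]$ and a proper subgroup $W\subsetneq V$ such that $f(x)=L_{W'}(g(x))$, where $W'=L_W(V)=\{L_W(v):v\in V\}$.
   Context: For a finite additive subgroup $U$ of $\overline{\mathbb{F}}_p$, $L_U(T)$ is a separable $\mathbb{F}_p$-linear (additive) polynomial of degree $|U|$, and $L_U:\overline{\mathbb{F}}_p\to\overline{\mathbb{F}}_p$ is an additive homomorphism with kernel $U$. *)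

From HB Require Import structures.
From mathcomp Require Import all_boot all_order all_algebra.
Set Implicit Arguments. Unset Strict Implicit. Unset Printing Implicit Defensive.
Import GRing.Theory.
Local Open Scope ring_scope.

(* Every element of F is algebraic over the prime subfield {n%:R}. Together
   with F algebraically closed of characteristic p, this makes F an algebraic
   closure of F_p. *)
Definition algebraic_over_prime_field (F : fieldType) : Prop :=
  forall x : F, exists q : {poly F},
    q != 0 /\ (forall i, exists n : nat, q`_i = n%:R) /\ root q x.

Definition fin_add_subgroup (F : fieldType) (U : seq F) : Prop :=
  uniq U /\ 0 \in U /\ {in U &, forall u v, u - v \in U}.

Definition LU (F : fieldType) (U : seq F) : {poly F} :=
  \prod_(u <- U) ('X - u%:P).

Definition LU_image (F : fieldType) (W V : seq F) : seq F :=
  undup [seq (LU W).[v] | v <- V].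

Definition reducible (R : unitRingType) (h : R) : Prop :=
  exists a b : R, a \isn't a GRing.unit /\ b \isn't a GRing.unit /\ h = a * b.

(* If [f = L_W'(g)], then [L_V = L_W' \o L_W] gives
   [L_V(T) - f = prod_(w' in W') (L_W(T) - g - w')], a product of at least two
   nonconstant factors. Conversely, let [A] be a monic irreducible proper factor of
   [L_V(T) - f] over [K = F(x)] and [theta] a root of [A] in [K[T]/(A)]. Since
   [L_V(T) - f = prod_(v in V) (T - theta - v)], the factor [A] is
   [prod_(v in S) (T - theta - v)] for the stabilizer [S] of [A] under translation by [V],
   a proper subgroup of [V]. Hence [A = L_S(T) - L_S(theta)], so [gamma := L_S(theta)] lies
   in [K], and [f = L_V(theta) = L_W'(gamma)] with [W' = L_S(V)]. As [F[x]] is integrally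
   closed, the root [gamma] of the monic [L_W'(Y) - f] is a polynomial [g(x)]. *)
From Pilot Require Import Defs.
From HB Require Import structures.
From mathcomp Require Import all_boot all_order all_algebra qfpoly.
From Stdlib Require Import Classical.
Import GRing.Theory.
Local Open Scope ring_scope.
Set Implicit Arguments. Unset Strict Implicit. Unset Printing Implicit Defensive.

Section IdomainPoly.
Variable R : idomainType.
Implicit Types (p q : {poly R}) (c : R).

Lemma size_subC p c : (1 < size p)%N -> size (p - c%:P) = size p.
Proof.
by move=> sp; rewrite size_polyDl // size_polyN size_polyC (leq_ltn_trans (leq_b1 _)).
Qed.

Lemma monic_subC p c : (1 < size p)%N -> p \is monic -> p - c%:P \is monic.
Proof.
move=> sp mp; rewrite monicE lead_coefDl ?(monicP mp) //.
by rewrite size_polyN size_polyC (leq_ltn_trans (leq_b1 _)).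
Qed.

Lemma size_sub_monic p q : p \is monic -> q \is monic -> size p = size q ->
  (size (p - q)%R < size p)%N.
Proof.
move=> mp mq spq.
have lead0 : (p - q)`_(size p).-1 = 0.
  by rewrite coefB {2}spq -!lead_coefE (monicP mp) (monicP mq) subrr.
rewrite ltn_neqAle (leq_trans (size_polyD _ _)) ?size_polyN -?spq ?maxnn // andbT.
apply/eqP => e; have : p - q != 0 by rewrite -size_poly_gt0 e size_poly_gt0 monic_neq0.
by rewrite -lead_coef_eq0 lead_coefE e lead0 eqxx.
Qed.

Lemma monic_eq_prod_XsubC p (rs : seq R) : p \is monic -> size p = (size rs).+1 ->
  uniq rs -> all (root p) rs -> p = \prod_(z <- rs) ('X - z%:P).
Proof.
move=> mp sp urs rootsp; apply/eqP; rewrite -subr_eq0; apply/eqP.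
apply: (roots_geq_poly_eq0 _ urs); last first.
  by rewrite -ltnS -sp size_sub_monic ?monic_prod_XsubC ?size_prod_XsubC.
apply/allP => z zrs; rewrite rootE hornerD hornerN horner_prod.
rewrite (bigD1_seq z) //= hornerXsubC subrr mul0r subr0.
by rewrite -rootE (allP rootsp).
Qed.

Lemma poly_nonunit p : (1 < size p)%N -> p \isn't a GRing.unit.
Proof. by move=> sp; rewrite poly_unitE gtn_eqF. Qed.

Lemma size_nonunit_gt1 p : p != 0 -> p \isn't a GRing.unit ->
  lead_coef p \is a GRing.unit -> (1 < size p)%N.
Proof.
move=> p0 np up; rewrite ltn_neqAle eq_sym size_poly_gt0 p0 andbT.
by apply: contra np => sp1; rewrite poly_unitE sp1; move: up; rewrite lead_coefE (eqP sp1).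
Qed.

Lemma size_nonunit_factor (h a b : {poly R}) : h \is monic ->
  h = a * b -> a \isn't a GRing.unit -> b \isn't a GRing.unit ->
  (1 < size a)%N /\ (size a < size h)%N.
Proof.
move=> mh eh na nb.
have /andP[a0 b0] : (a != 0) && (b != 0) by rewrite -negb_or -mulf_eq0 -eh monic_neq0.
have /andP[ua ub] : (lead_coef a \is a GRing.unit) && (lead_coef b \is a GRing.unit).
  by rewrite -unitrM -lead_coefM -eh (monicP mh) unitr1.
have [sa sb] := (size_nonunit_gt1 a0 na ua, size_nonunit_gt1 b0 nb ub).
by split => //; rewrite eh size_mul // -subn1 ltn_subRL addnC ltn_add2l.
Qed.

Lemma irredp_eqp (p q : {poly R}) :
  p %= q -> irreducible_poly p -> irreducible_poly q.
Proof.
move=> pq [sp irr_p]; split=> [|d sd dq]; first by rewrite -(eqp_size pq).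
by rewrite -(eqp_rtrans pq) irr_p // (eqp_dvdr _ pq).
Qed.

End IdomainPoly.

Lemma comp_polyXsubC (R : comNzRingType) (q : {poly R}) c :
  ('X - c%:P) \Po q = q - c%:P.
Proof. by rewrite comp_polyB comp_polyX comp_polyC. Qed.

Lemma monic_irreducible_dvdp (K : fieldType) (a : {poly K}) : (1 < size a)%N ->
  exists2 A, monic_irreducible_poly A & A %| a.
Proof.
elim: {a}(size a) {-2}a (leqnn (size a)) => [|n IHn] a san sa1.
  by move: (leq_trans sa1 san).
have a0 : a != 0 by rewrite -size_poly_gt0 ltnW.
have [irr_a | red_a] := classic (irreducible_poly a).
  have la0 : lead_coef a != 0 by rewrite lead_coef_eq0.
  exists ((lead_coef a)^-1 *: a); last by rewrite dvdpZl ?invr_eq0.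
  split; last by rewrite monicE lead_coefZ mulVf.
  by apply: irredp_eqp irr_a; rewrite eqp_sym eqp_scale ?invr_eq0.
have [q [sq1 dvd_qa not_qa]] : exists q : {poly K}, [/\ size q != 1, q %| a & ~ q %= a].
  apply: NNPP => none; apply: red_a; split => // q sq1 dvd_qa.
  by apply: NNPP => not_qa; apply: none; exists q.
have q0 : q != 0 by apply: contraTneq dvd_qa => ->; rewrite dvd0p.
have sqa : (size q < size a)%N.
  by rewrite ltn_neqAle dvdp_leq // andbT dvdp_size_eqp //; exact/negP.
have sq : (1 < size q)%N by rewrite ltn_neqAle eq_sym sq1 size_poly_gt0.
have [A irrA dvd_Aq] := IHn q (leq_trans sqa san) sq.
by exists A => //; exact: dvdp_trans dvd_Aq dvd_qa.
Qed.

(* [fin_add_subgroup] and [LU] of Defs, over an integral domain so that they also apply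
   with coefficients in [F[x]]. *)
Section SubgroupPoly.
Variable R : idomainType.

Definition add_subgroup (U : seq R) :=
  uniq U /\ 0 \in U /\ {in U &, forall u v, u - v \in U}.

Definition subgroup_poly (U : seq R) : {poly R} := \prod_(u <- U) ('X - u%:P).

Lemma monic_subgroup_poly U : subgroup_poly U \is monic.
Proof. exact: monic_prod_XsubC. Qed.

Lemma size_subgroup_poly U : size (subgroup_poly U) = (size U).+1.
Proof. exact: size_prod_XsubC. Qed.

Lemma root_subgroup_poly U x : root (subgroup_poly U) x = (x \in U).
Proof. exact: root_prod_XsubC. Qed.

Lemma size_subgroup_poly_subC U c : (0 < size U)%N ->
  size (subgroup_poly U - c%:P) = (size U).+1.
Proof. by move=> U0; rewrite size_subC size_subgroup_poly. Qed.

Lemma monic_subgroup_poly_subC U c : (0 < size U)%N -> subgroup_poly U - c%:P \is monic.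
Proof. by move=> U0; rewrite monic_subC ?monic_subgroup_poly // size_subgroup_poly. Qed.

Variable U : seq R.
Hypothesis sU : add_subgroup U.
Local Notation L := (subgroup_poly U).

Lemma add_subgroup0 : 0 \in U. Proof. by case: sU => _ []. Qed.

Lemma add_subgroupB u v : u \in U -> v \in U -> u - v \in U.
Proof. by case: sU => _ [_]; apply. Qed.

Lemma add_subgroupN u : u \in U -> - u \in U.
Proof. by move=> uU; rewrite -sub0r add_subgroupB ?add_subgroup0. Qed.

Lemma add_subgroupD u v : u \in U -> v \in U -> u + v \in U.
Proof. by move=> uU vU; rewrite -[v]opprK add_subgroupB ?add_subgroupN. Qed.

Lemma size_add_subgroup_gt0 : (0 < size U)%N.
Proof. by case: U add_subgroup0. Qed.

Lemma perm_add_subgroup_addr c : c \in U -> perm_eq [seq u + c | u <- U] U.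
Proof.
move=> cU; case: sU => Uuniq _; apply: uniq_perm => //.
  by rewrite map_inj_uniq //; exact: addIr.
move=> x; apply/mapP/idP => [[u uU ->]|xU]; first exact: add_subgroupD.
by exists (x - c); rewrite ?add_subgroupB // subrK.
Qed.

Lemma subgroup_poly_addr x u : u \in U -> L.[x + u] = L.[x].
Proof.
move=> uU; rewrite !horner_prod -(perm_big _ (perm_add_subgroup_addr uU)) big_map.
by apply: eq_bigr => w _; rewrite !hornerXsubC opprD addrACA subrr addr0.
Qed.

(* The translates [c + u] are distinct roots of [L - L.[c]], which has the same degree. *)
Lemma subgroup_poly_subC c : L - L.[c]%:P = \prod_(u <- U) ('X - (c + u)%:P).
Proof.
rewrite -(big_map (fun u => c + u) predT (fun z => 'X - z%:P)).
have U0 := size_add_subgroup_gt0.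
apply: monic_eq_prod_XsubC; first exact: monic_subgroup_poly_subC.
- by rewrite size_subgroup_poly_subC // size_map.
- by case: sU => uU _; rewrite map_inj_uniq //; exact: addrI.
apply/allP => _ /mapP[u uU ->].
by rewrite rootE hornerD hornerN hornerC subgroup_poly_addr ?subrr.
Qed.

Lemma subgroup_polyB x y : L.[x - y] = L.[x] - L.[y].
Proof.
have := congr1 (horner^~ x) (subgroup_poly_subC y).
rewrite hornerD hornerN hornerC => ->; rewrite /subgroup_poly !horner_prod.
by apply: eq_bigr => u _; rewrite !hornerXsubC opprD addrA.
Qed.

Lemma subgroup_poly0 : L.[0] = 0.
Proof. by apply/eqP; rewrite -rootE root_subgroup_poly add_subgroup0. Qed.

Lemma subgroup_polyN x : L.[- x] = - L.[x].
Proof. by rewrite -sub0r subgroup_polyB subgroup_poly0 sub0r. Qed.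

Lemma subgroup_polyD x y : L.[x + y] = L.[x] + L.[y].
Proof. by rewrite -{1}[y]opprK subgroup_polyB subgroup_polyN opprK. Qed.

End SubgroupPoly.

Section SubgroupPolyComp.
Variable R : idomainType.
Variables W V : seq R.
Hypotheses (sW : add_subgroup W) (sV : add_subgroup V).
Local Notation LW := (subgroup_poly W).

Definition subgroup_poly_image := undup [seq LW.[v] | v <- V].
Local Notation W' := subgroup_poly_image.

Lemma add_subgroup_image : add_subgroup W'.
Proof.
split; first exact: undup_uniq.
split; first by rewrite mem_undup; apply/mapP; exists 0; rewrite ?add_subgroup0 ?subgroup_poly0.
move=> x y; rewrite !mem_undup => /mapP[a aV ->] /mapP[b bV ->].
by apply/mapP; exists (a - b); rewrite ?add_subgroupB ?subgroup_polyB.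
Qed.

Hypothesis WV : {subset W <= V}.

Lemma perm_subgroup_cosets (r : R -> R) :
    {in W', forall w', r w' \in V /\ LW.[r w'] = w'} ->
  perm_eq V [seq r w' + w | w' <- W', w <- W].
Proof.
move=> rP; have LW0 w : w \in W -> LW.[w] = 0.
  by move=> wW; apply/eqP; rewrite -rootE root_subgroup_poly.
apply: uniq_perm; [by case: sV | |].
  rewrite allpairs_uniq ?undup_uniq //; first by case: sW.
  move=> [a1 b1] [a2 b2] /allpairsP[[x1 y1] /= [x1W' y1W [-> ->]]].
  move=> /allpairsP[[x2 y2] /= [x2W' y2W [-> ->]]] /= e.
  have ex : x1 = x2.
    have := congr1 (horner LW) e; rewrite !subgroup_polyD //.
    by rewrite (proj2 (rP _ x1W')) (proj2 (rP _ x2W')) !LW0 ?addr0.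
  by move: e; rewrite ex => /addrI ->.
move=> v; apply/idP/allpairsP => [vV|[[w' w] /= [w'W' wW ->]]]; last first.
  by apply: add_subgroupD (WV wW); case: (rP _ w'W').
have LvW' : LW.[v] \in W' by rewrite mem_undup; apply/mapP; exists v.
have [rV rL] := rP _ LvW'.
exists (LW.[v], v - r LW.[v]) => /=; split => //; last by rewrite addrC subrK.
by rewrite -root_subgroup_poly rootE subgroup_polyB // rL subrr.
Qed.

Lemma subgroup_poly_comp : subgroup_poly V = subgroup_poly W' \Po LW.
Proof.
pose r w' := nth 0 V (index w' [seq LW.[v] | v <- V]).
have rP : {in W', forall w', r w' \in V /\ LW.[r w'] = w'}.
  move=> w'; rewrite mem_undup => w'in.
  have ilt : (index w' [seq LW.[v] | v <- V] < size V)%N.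
    by rewrite -(size_map (horner LW)) index_mem.
  by rewrite mem_nth // -(nth_map 0 0 (horner LW)) // nth_index.
rewrite /subgroup_poly rmorph_prod (perm_big _ (perm_subgroup_cosets rP)) big_allpairs_dep.
apply: eq_big_seq => w' w'W' /=.
by rewrite comp_polyB comp_polyX comp_polyC -subgroup_poly_subC // (proj2 (rP _ w'W')).
Qed.

End SubgroupPolyComp.

Lemma map_subgroup_poly (R S : idomainType) (phi : {rmorphism R -> S}) (U : seq R) :
  map_poly phi (subgroup_poly U) = subgroup_poly (map phi U).
Proof.
by rewrite /subgroup_poly rmorph_prod big_map; apply: eq_bigr => u _; exact: map_polyXsubC.
Qed.

Lemma add_subgroup_map (R S : idomainType) (phi : {rmorphism R -> S}) (U : seq R) :
  injective phi -> add_subgroup U -> add_subgroup (map phi U).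
Proof.
move=> phi_inj [Uuniq [U0 UB]]; split; first by rewrite map_inj_uniq.
split; first by apply/mapP; exists 0; rewrite ?rmorph0.
move=> _ _ /mapP[a aU ->] /mapP[b bU ->].
by apply/mapP; exists (a - b); rewrite ?UB ?rmorphB.
Qed.

Lemma subgroup_poly_comp_subC (R : idomainType) (V W : seq R) (g : {poly R}) :
    add_subgroup V -> add_subgroup W -> {subset W <= V} ->
  let W' := subgroup_poly_image W V in
  (subgroup_poly V)^:P - (subgroup_poly W' \Po g)%:P =
  \prod_(w' <- W') ((subgroup_poly W)^:P - (g + w'%:P)%:P).
Proof.
move=> sV sW WV W'; have sW'C := add_subgroup_map polyC_inj (add_subgroup_image sW sV).
have -> : subgroup_poly W' \Po g = (subgroup_poly W')^:P.[g] by [].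
rewrite (subgroup_poly_comp sW sV WV) map_comp_poly !map_subgroup_poly.
rewrite -[RHS](eq_bigr _ (fun u _ => comp_polyXsubC _ (g + u%:P))) -rmorph_prod /=.
rewrite /W' -(big_map polyC xpredT (fun u => 'X - (g + u)%:P)).
by rewrite -subgroup_poly_subC // rmorphB /= comp_polyC.
Qed.

(* The two factors: the one for [w' = 0], and the product of the others, which contains
   the factor for [w' = L_W(v)] with [v] in [V] but not in [W]. *)
Lemma reducible_subgroup_poly_comp (R : idomainType) (V W : seq R) (g : {poly R}) :
  add_subgroup V -> add_subgroup W -> {subset W <= V} -> (exists2 v, v \in V & v \notin W) ->
  reducible ((subgroup_poly V)^:P - (subgroup_poly (subgroup_poly_image W V) \Po g)%:P).
Proof.
move=> sV sW WV [v vV vW]; rewrite subgroup_poly_comp_subC //.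
set W' := subgroup_poly_image W V; set Q := (subgroup_poly W)^:P.
have [W'uniq [W'0 _]] := add_subgroup_image sW sV.
have monic_factor c : Q - c%:P \is monic.
  by rewrite /Q map_subgroup_poly monic_subgroup_poly_subC // size_map size_add_subgroup_gt0.
have size_factor c : (1 < size (Q - c%:P)%R)%N.
  by rewrite /Q map_subgroup_poly size_subgroup_poly_subC ?size_map ?ltnS size_add_subgroup_gt0.
rewrite (bigD1_seq 0) //=.
exists (Q - (g + 0%:P)%:P), (\prod_(w' <- W' | w' != 0) (Q - (g + w'%:P)%:P)).
split; [exact: poly_nonunit | split => //].
have LvW' : (subgroup_poly W).[v] \in [seq w' <- W' | w' != 0].
  rewrite mem_filter -rootE root_subgroup_poly vW /=.
  by rewrite mem_undup; apply/mapP; exists v.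
apply/poly_nonunit/(leq_trans (size_factor (g + (subgroup_poly W).[v]%:P)))/dvdp_leq.
  by rewrite monic_neq0 ?monic_prod.
by rewrite -big_filter (bigD1_seq _ LvW') ?filter_uniq //= dvdp_mulIl.
Qed.

Local Notation "x %:F" := (@FracField.tofrac _ x) (format "x %:F").

Lemma tofrac_inj (R : idomainType) : injective (@FracField.tofrac R).
Proof. by move=> x y /eqP; rewrite tofrac_eq => /eqP. Qed.

Lemma size_map_tofrac (R : idomainType) (p : {poly R}) :
  size (map_poly (@FracField.tofrac R) p) = size p.
Proof. by rewrite size_map_inj_poly //; exact: tofrac_inj. Qed.

Section FractionRepr.
Local Open Scope quotient_scope.

Lemma tofrac_repr (R : idomainType) (z : {fraction R}) :
  exists a b : R, b != 0 /\ z = a%:F / b%:F.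
Proof.
elim/quotW: z => x; exists \n_x, \d_x; split; first exact: denom_ratioP.
have d0 : (\d_x)%:F != 0 :> {fraction R} by rewrite tofrac_eq0 denom_ratioP.
apply: (canRL (mulfK d0)); unlock tofrac.
change (FracField.mul (\pi_{fraction R} x) (\pi_{fraction R} (Ratio \d_x 1))
  = \pi_{fraction R} (Ratio \n_x 1)).
rewrite -FracField.pi_mul; apply/eqmodP; rewrite /= FracField.equivfE /FracField.mulf /=.
by rewrite !numden_Ratio ?mulf_neq0 ?oner_neq0 ?denom_ratioP // !mulr1 mulrC.
Qed.

End FractionRepr.

Lemma tofrac_coprime_repr (F : fieldType) (z : {fraction {poly F}}) :
  exists a b : {poly F}, [/\ b != 0, coprimep a b & z = a%:F / b%:F].
Proof.
have [a [b [b0 ->]]] := tofrac_repr z; set d := gcdp a b.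
have d0 : d != 0 by rewrite gcdp_eq0 negb_and b0 orbT.
have ea : a = a %/ d * d by rewrite divpK // dvdp_gcdl.
have eb : b = b %/ d * d by rewrite divpK // dvdp_gcdr.
exists (a %/ d), (b %/ d); split; last first.
- by rewrite {1}ea {1}eb !tofracM invfM mulrACA divff ?mulr1 ?tofrac_eq0.
- by apply: coprimep_div_gcd; rewrite b0 orbT.
by apply: contra b0; rewrite {2}eb => /eqP ->; rewrite mul0r.
Qed.

(* [F[x]] is integrally closed: clearing denominators in [P.[a/b] = 0] shows that [b]
   divides [a ^+ deg P], hence is a constant when [a] and [b] are coprime. *)
Lemma root_monic_tofrac (F : fieldType) (P : {poly {poly F}}) (z : {fraction {poly F}}) :
  P \is monic -> root (map_poly (@FracField.tofrac _) P) z -> exists g : {poly F}, z = g%:F.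
Proof.
move=> mP rz; have [a [b [b0 cop_ab ez]]] := tofrac_coprime_repr z; subst z.
have bF0 : b%:F != 0 by rewrite tofrac_eq0.
set m := (size P).-1.
have szP : size P = m.+1.
  rewrite /m prednK // -size_map_tofrac (ltn_trans _ (root_size_gt1 _ rz)) //.
  by rewrite -size_poly_gt0 size_map_tofrac size_poly_gt0 monic_neq0.
have lcP : P`_m = 1 by rewrite /m -lead_coefE (monicP mP).
pose H := \sum_(i < m) P`_i * a ^+ i * b ^+ (m - i.+1).
have eqH : a ^+ m = - (b * H).
  apply/eqP; rewrite -addr_eq0; apply/eqP/(@tofrac_inj _); rewrite tofrac0.
  have := congr1 ( *%R^~ (b%:F ^+ m)) (eqP rz).
  rewrite mul0r (@horner_coef_wide _ m.+1) ?size_map_tofrac ?szP //.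
  rewrite mulr_suml big_ord_recr /= coef_map /= lcP tofrac1 mul1r.
  rewrite expr_div_n divfK ?expf_neq0 // => <-; rewrite tofracD tofracM rmorph_sum mulr_sumr.
  rewrite addrC; congr (_ + _); first exact: tofracXn.
  apply: eq_bigr => i _.
  have -> : b%:F ^+ m = b%:F ^+ i * b%:F * b%:F ^+ (m - i.+1).
    by rewrite -exprSr -exprD subnKC.
  rewrite coef_map /= !tofracM !tofracXn expr_div_n.
  rewrite !mulrA mulfVK ?expf_neq0 //.
  by congr (_ * _); rewrite -[LHS]mulrA mulrC.
have : b %| 1.
  have cop_bam : coprimep b (a ^+ m) by rewrite coprimep_expr // coprimep_sym.
  rewrite -(Gauss_dvdpl _ cop_bam) mul1r eqH.
  by rewrite dvdpNr dvdp_mulr.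
rewrite dvdp1 => /size_poly1P[c c0 eb]; rewrite eb in bF0 *; exists (a * (c^-1)%:P).
by apply: (mulIf bF0); rewrite divfK // -tofracM -mulrA -polyCM mulVf ?polyC1 ?mulr1.
Qed.

Lemma comp_poly_XaddC (R : comNzRingType) (c d : R) :
  ('X + c%:P) \Po ('X + d%:P) = 'X + (d + c)%:P.
Proof. by rewrite comp_polyD comp_polyX comp_polyC polyCD addrA. Qed.

Lemma comp_poly_XaddC_invB (R : comNzRingType) (A : {poly R}) (c d : R) :
  A \Po ('X + c%:P) = A -> A \Po ('X + d%:P) = A -> A \Po ('X + (c - d)%:P) = A.
Proof.
move=> Ac Ad; have AN : A \Po ('X + (- d)%:P) = A.
  by rewrite -{1}Ad -comp_polyA comp_poly_XaddC addNr addr0 comp_polyXr.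
by rewrite -(addrC (- d)) -comp_poly_XaddC comp_polyA Ac AN.
Qed.

Lemma dvdp_comp_XaddC (K : fieldType) (A : {poly K}) (c : K) : A \is monic ->
  (A %| A \Po ('X + c%:P)) = (A \Po ('X + c%:P) == A).
Proof.
move=> mA; apply/idP/eqP => [dvdA|->]; last exact: dvdpp.
have sAc : size (A \Po ('X + c%:P)) = size A by rewrite size_comp_poly2 // size_XaddC.
have mAc : A \Po ('X + c%:P) \is monic.
  by rewrite monicE lead_coef_comp ?size_XaddC // (monicP mA) lead_coefXaddC expr1n mulr1.
by apply/eqP; rewrite eq_sym -eqp_monic // -dvdp_size_eqp ?sAc.
Qed.

Lemma in_qpolyC (R : nzRingType) (h : {poly R}) c : in_qpoly h c%:P = qpolyC h c.
Proof.
apply: val_inj; rewrite /= Pdiv.CommonRing.rmodp_small // size_polyC.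
exact: leq_ltn_trans (leq_b1 _) (size_mk_monic_gt1 h).
Qed.

Section AdjoinRoot.
Variables (K : fieldType) (A : {poly K}).
Hypothesis hA : monic_irreducible_poly A.
Local Notation E := {poly %/ A with hA}.

Definition adjoin_const : K -> E := qfpoly_const hA.
HB.instance Definition _ := GRing.RMorphism.copy adjoin_const (qpolyC A).
Local Notation kappa := adjoin_const.

Definition adjoin_root : E := in_qpoly A 'X.
Local Notation theta := adjoin_root.

Lemma adjoin_const_inj : injective kappa. Proof. exact: fmorph_inj. Qed.

Lemma in_qpoly_eq0 q : (in_qpoly A q == 0 :> E) = (A %| q).
Proof.
have mA : A \is monic by case: hA.
by apply/eqP/idP => [/val_eqP /= | dvdAq]; [|apply/val_eqP => /=];
  rewrite -Pdiv.IdomainMonic.modpE // mk_monicE.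
Qed.

Lemma root_adjoin_root_addC q c :
  root (map_poly kappa q) (theta + kappa c) = (A %| q \Po ('X + c%:P)).
Proof.
by rewrite rootE -[kappa c]in_qpolyC -in_qpolyD -in_qpoly_comp_horner in_qpoly_eq0.
Qed.

End AdjoinRoot.

Section RootOfFactor.
Variables (F K : fieldType) (iota : {rmorphism F -> K}) (V : seq F) (phi : K) (A : {poly K}).
Hypotheses (sV : add_subgroup V) (hA : monic_irreducible_poly A).
Hypothesis dvdA : A %| subgroup_poly (map iota V) - phi%:P.
Local Notation kappa := (adjoin_const hA).
Local Notation theta := (adjoin_root hA).
Local Notation emb := (kappa \o iota).

Lemma emb_inj : injective emb.
Proof. exact: inj_comp (@adjoin_const_inj _ _ hA) (fmorph_inj iota). Qed.

Lemma map_subgroup_poly_emb (U : seq F) :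
  map_poly kappa (subgroup_poly (map iota U)) = subgroup_poly (map emb U).
Proof. by rewrite map_subgroup_poly -map_comp. Qed.

Lemma subgroup_poly_adjoin_root : (subgroup_poly (map emb V)).[theta] = kappa phi.
Proof.
have := root_adjoin_root_addC hA (subgroup_poly (map iota V) - phi%:P) 0.
rewrite rmorph0 addr0 addr0 comp_polyXr dvdA rmorphB /= map_polyC /=.
by rewrite map_subgroup_poly_emb rootE !hornerE subr_eq0 => /eqP.
Qed.

Lemma adjoin_factor : exists2 S : seq F, subseq S V &
  map_poly kappa A = \prod_(v <- S) ('X - (theta + emb v)%:P).
Proof.
have semb : add_subgroup (map emb V) by exact: add_subgroup_map emb_inj sV.
have : map_poly kappa A %| \prod_(v <- V) ('X - (theta + emb v)%:P).
  rewrite -(big_map emb predT (fun u => 'X - (theta + u)%:P)) -subgroup_poly_subC //.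
  rewrite subgroup_poly_adjoin_root -map_subgroup_poly_emb -map_polyC -rmorphB.
  by rewrite /= dvdp_map.
case/dvdp_prod_XsubC => m; rewrite eqp_monic ?monic_prod_XsubC ?map_monic //; last by case: hA.
by move/eqP=> eA; exists (mask m V); rewrite ?mask_subseq.
Qed.

Variable S : seq F.
Hypotheses (SV : subseq S V) (eA : map_poly kappa A = \prod_(v <- S) ('X - (theta + emb v)%:P)).

Lemma mem_adjoin_factor v : (v \in S) = (A \Po ('X + (iota v)%:P) == A).
Proof.
have mA : A \is monic by case: hA.
rewrite -dvdp_comp_XaddC // -root_adjoin_root_addC eA.
rewrite -(big_map (fun v => theta + emb v) predT (fun z => 'X - z%:P)) root_prod_XsubC.
by rewrite (mem_map (inj_comp (@addrI _ theta) emb_inj)).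
Qed.

Lemma add_subgroup_adjoin_factor : add_subgroup S.
Proof.
split; first by case: sV => Vuniq _; exact: subseq_uniq SV Vuniq.
split; first by rewrite mem_adjoin_factor rmorph0 addr0 comp_polyXr.
move=> s t; rewrite !mem_adjoin_factor rmorphB => /eqP As /eqP At.
exact/eqP/comp_poly_XaddC_invB.
Qed.

Lemma size_adjoin_factor : size A = (size S).+1.
Proof.
by rewrite -(size_map_inj_poly (@adjoin_const_inj _ _ hA) (rmorph0 _)) eA size_prod_XsubC.
Qed.

(* Comparing constant coefficients in [A = L_S(T) - L_S(theta)]. *)
Lemma subgroup_poly_adjoin_factor : (subgroup_poly (map emb S)).[theta] = kappa (- A`_0).
Proof.
have sS := add_subgroup_map emb_inj add_subgroup_adjoin_factor.
have := congr1 (fun p : {poly {poly %/ A with hA}} => p`_0) eA.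
rewrite /= -(big_map emb predT (fun u => 'X - (theta + u)%:P)) -subgroup_poly_subC //.
rewrite coef_map coefB coefC /=.
rewrite -[(subgroup_poly _)`_0]horner_coef0 subgroup_poly0 // sub0r.
by move=> e; rewrite rmorphN /= e opprK.
Qed.

Lemma subgroup_poly_image_adjoin_factor :
  (subgroup_poly (map iota (subgroup_poly_image S V))).[- A`_0] = phi.
Proof.
apply: (@adjoin_const_inj _ _ hA); rewrite -horner_map /= map_subgroup_poly_emb.
rewrite -subgroup_poly_adjoin_factor -horner_comp -subgroup_poly_adjoin_root.
rewrite -!map_subgroup_poly -map_comp_poly -subgroup_poly_comp //.
- exact: add_subgroup_adjoin_factor.
- exact: mem_subseq.
Qed.

End RootOfFactor.

Lemma exists_notin_size_lt (T : eqType) (s t : seq T) :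
  uniq s -> (size t < size s)%N -> exists2 x, x \in s & x \notin t.
Proof.
move=> s_uniq lt_ts; have [/allP st | /allPn[x xs xt]] := boolP (all (mem t) s).
  by move: lt_ts; rewrite ltnNge uniq_leq_size.
by exists x.
Qed.

Lemma map_tofrac_subgroup_poly_subC (F : fieldType) (U : seq F) (p : {poly F}) :
  map_poly (@FracField.tofrac _) ((subgroup_poly U)^:P - p%:P) =
  subgroup_poly (map (@FracField.tofrac _ \o polyC) U) - (p%:F)%:P.
Proof. by rewrite rmorphB /= map_polyC -map_poly_comp map_subgroup_poly. Qed.

Lemma subgroup_poly_image_root_of_reducible (F : fieldType) (V : seq F) (f : {poly F}) :
    add_subgroup V -> reducible ((subgroup_poly V)^:P - f%:P) ->
  exists (S : seq F) (gamma : {fraction {poly F}}),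
    [/\ add_subgroup S, subseq S V, (size S < size V)%N &
      (subgroup_poly (map (@FracField.tofrac _ \o polyC) (subgroup_poly_image S V))).[gamma]
      = f%:F].
Proof.
move=> sV [a [b [na [nb eh]]]].
have V0 := size_add_subgroup_gt0 sV.
have mh : (subgroup_poly V)^:P - f%:P \is monic.
  by rewrite map_subgroup_poly monic_subgroup_poly_subC ?size_map.
have [sa1 sah] := size_nonunit_factor mh eh na nb.
rewrite map_subgroup_poly size_subgroup_poly_subC size_map // in sah.
have [A hA dvd_Aa] : exists2 A, monic_irreducible_poly A & A %| map_poly (@FracField.tofrac _) a.
  by apply: monic_irreducible_dvdp; rewrite size_map_tofrac.
have dvdA : A %| subgroup_poly (map (@FracField.tofrac _ \o polyC) V) - (f%:F)%:P.
  by rewrite -map_tofrac_subgroup_poly_subC eh rmorphM (dvdp_trans dvd_Aa) ?dvdp_mulr.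
have [S SV eA] := adjoin_factor sV hA dvdA.
exists S, (- A`_0); split => //.
- exact: (add_subgroup_adjoin_factor sV SV eA).
- rewrite -ltnS -(size_adjoin_factor eA) (leq_ltn_trans _ sah) // -(size_map_tofrac a).
  by apply: dvdp_leq dvd_Aa; rewrite -size_poly_gt0 size_map_tofrac ltnW.
exact: (subgroup_poly_image_adjoin_factor sV dvdA SV eA).
Qed.

Lemma subgroup_poly_comp_of_reducible (F : fieldType) (V : seq F) (f : {poly F}) :
  add_subgroup V -> reducible ((subgroup_poly V)^:P - f%:P) ->
  exists (g : {poly F}) (W : seq F),
    [/\ add_subgroup W, {subset W <= V}, (exists2 v, v \in V & v \notin W)
      & f = subgroup_poly (subgroup_poly_image W V) \Po g].
Proof.
move=> sV /(subgroup_poly_image_root_of_reducible sV)[S [gamma [sS SV ltSV Lgamma]]].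
have [g eg] : exists g : {poly F}, gamma = g%:F.
  apply: (@root_monic_tofrac _ ((subgroup_poly (subgroup_poly_image S V))^:P - f%:P)).
    rewrite map_subgroup_poly monic_subgroup_poly_subC // size_map.
    exact: size_add_subgroup_gt0 (add_subgroup_image sS sV).
  by rewrite map_tofrac_subgroup_poly_subC rootE !hornerE Lgamma subrr.
exists g, S; split => //; first exact: mem_subseq.
  by apply: exists_notin_size_lt ltSV; case: sV.
apply: (@tofrac_inj _); rewrite -Lgamma eg.
by rewrite /comp_poly -horner_map /= -map_poly_comp map_subgroup_poly.
Qed.

Unset Implicit Arguments.

Theorem proposition4p8 (p : nat) (F : closedFieldType)
  (Hp : prime p) (HpF : p \in [pchar F])
  (Halg : algebraic_over_prime_field F)
  (V : seq F) (HV : fin_add_subgroup V) (f : {poly F}) :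
  reducible ((LU V) ^:P - f%:P)
  <-> exists (g : {poly F}) (W : seq F),
        [/\ fin_add_subgroup W, {subset W <= V}, (exists2 v, v \in V & v \notin W)
          & f = LU (LU_image W V) \Po g].
Proof.
split => [red | [g [W [sW WV notWV ->]]]].
- exact: subgroup_poly_comp_of_reducible HV red.
- exact: reducible_subgroup_poly_comp HV sW WV notWV.
Qed.
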